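(* Under the Standing Setup and Assumption (G) described in the context, suppose there exists exactly one $a\in V_k$ such that $\mathcal{E}(f\oplus\varphi_a)\neq0$. Then $$\mathcal{E}(PC_{f,\mathcal{T}})=\big[\mathcal{E}(f\oplus\varphi_a)\big]^{2^s}.$$ In particular, if $f$ is $(k-1)$-resilient, then $\mathcal{E}(PC_{f,\mathcal{T}})=\big[\mathcal{E}(f\oplus\varphi_{1_k})\big]^{2^s}$, where $1_k\in\mathbf{F}_2^n$ has its first $k$ coordinates equal to $1$ and the others equal to $0$.
   Context: Standing Setup. $f:\mathbf{F}_2^n\to\mathbf{F}_2$ is a Boolean function. $\mathbf{x}_1,\ldots,\mathbf{x}_n$ are binary sequences, $\mathbf{x}_j=(x_j(t))_{t\ge0}$, with $\mathbf{x}_j$ periodic of period $T_j$, i.e. $x_j(t)=x_j(t \bmod T_j)$. Let $s\ge1$ and integers $0=\ell_1<\ell_2<\cdots<\ell_{s+1}=k\le n$; variable $j$ belongs to block $i$ if $\ell_i<j\le\ell_{i+1}$. For $1\le i\le s$, $M_i=q_i\,\mathrm{lcm}(T_{\ell_i+1},\ldots,T_{\ell_{i+1}})$ with $q_i$ a positive integer. For $c=\sum_{i=1}^s c_i2^{i-1}\in\{0,\ldots,2^s-1\}$ with $c_i\in\{0,1\}$, put $\tau_c=\sum_{i=1}^s c_iM_i$, and $\mathcal{T}=\{\tau_c\}$. The parity-check sequence is $PC_{f,\mathcal{T}}(t)=\bigoplus_{c=0}^{2^s-1} f\big(x_1(t+\tau_c),\ldots,x_n(t+\tau_c)\big)$.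 The bias of a Boolean function $h$ of $m$ variables is $\mathcal{E}(h)=2^{-m}\sum_{x\in\mathbf{F}_2^m}(-1)^{h(x)}$. The bias $\mathcal{E}(PC_{f,\mathcal{T}})$ is the bias of $PC_{f,\mathcal{T}}(t)$ (for a fixed $t\ge0$) viewed as a Boolean function of the $T_1+\cdots+T_n$ bits $x_j(0),\ldots,x_j(T_j-1)$, $1\le j\le n$; equivalently $\mathbb{E}[(-1)^{PC_{f,\mathcal{T}}(t)}]$ when these bits are independent and uniform. Assumption (G): (i) for every $j$ with $k<j\le n$, the $2^s$ integers $\tau_c$ are pairwise incongruent modulo $T_j$; (ii) for every $i\in\{1,\ldots,s\}$ and every $j$ in block $i$, the $2^{s-1}$ integers $\sum_{l\ne i}c_lM_l$ ($c_l\in\{0,1\}$) are pairwise incongruent modulo $T_j$. $V_k\subseteq\mathbf{F}_2^n$ is the subspace spanned by the first $k$ standard basis vectors. For $\beta\in\mathbf{F}_2^n$, $\varphi_\beta$ is the linear function $x\mapsto\beta\cdot x$. A Boolean function $f$ of $n$ variables is $t$-resilient if $\mathcal{E}(f\oplus\varphi_\beta)=0$ for every $\beta\in\mathbf{F}_2^n$ of Hamming weight at most $t$ (equivalently, $f$ is balanced and its output distribution is unchanged when any $t$ inputs are fixed). *)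

From HB Require Import structures.
From mathcomp Require Import all_boot all_order all_algebra.
Set Implicit Arguments. Unset Strict Implicit. Unset Printing Implicit Defensive.
Import Order.TTheory GRing.Theory Num.Theory.

(* Conventions: variables are 0-based, j : 'I_n stands for x_{j+1};
   blocks are 0-based, i < s stands for block i+1.
   Booleans represent F_2. *)

Local Open Scope ring_scope.

Definition bias (A : finType) (h : A -> bool) : rat :=
  (\sum_(a : A) (-1) ^+ h a) / #|A|%:R.

Definition dotb n (beta x : {ffun 'I_n -> bool}) : bool :=
  \big[addb/false]_(i < n) (beta i && x i).

Definition inVk n k (a : {ffun 'I_n -> bool}) : bool :=
  [forall i : 'I_n, (k <= i)%N ==> ~~ a i].

Definition onek n k : {ffun 'I_n -> bool} := [ffun i : 'I_n => (i < k)%N].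

Definition hweight n (b : {ffun 'I_n -> bool}) : nat := #|[set i | b i]|.

Definition resilient n (f : {ffun 'I_n -> bool} -> bool) (t : nat) : Prop :=
  forall beta : {ffun 'I_n -> bool}, (hweight beta <= t)%N ->
    bias (fun x => f x (+) dotb beta x) = 0.

(* The random initial bits: x_j(0), ..., x_j(T_j - 1) for each j. *)
Definition bitsT n (T : nat -> nat) : finType := {j : 'I_n & 'I_(T j)}.
Definition Bits n (T : nat -> nat) := {ffun bitsT n T -> bool}.

(* Value of the periodic sequence x_j at time t: x_j(t) = x_j(t mod T_j). *)
Definition xval n (T : nat -> nat) (X : Bits n T) (j : 'I_n) (t : nat) : bool :=
  match @insub nat (fun m => (m < T j)%N) 'I_(T j) (t %% T j)%N with
  | Some i => X (Tagged (fun j : 'I_n => 'I_(T j)) i)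
  | None => false
  end.

(* M_i = q_i * lcm(T_j : j in block i), block i = { j | l i <= j < l (i+1) } *)
Definition Mblk (T q l : nat -> nat) (i : nat) : nat :=
  (q i * \big[lcmn/1%N]_(l i <= j < l i.+1) T j)%N.

Definition tau s (T q l : nat -> nat) (c : {ffun 'I_s -> bool}) : nat :=
  (\sum_(i < s) c i * Mblk T q l i)%N.

Definition PC n s (T q l : nat -> nat) (f : {ffun 'I_n -> bool} -> bool)
    (X : Bits n T) (t : nat) : bool :=
  \big[addb/false]_(c : {ffun 'I_s -> bool})
     f [ffun j : 'I_n => xval X j (t + tau T q l c)].

Definition assumptionG n k s (T q l : nat -> nat) : Prop :=
  (forall j : nat, (k <= j < n)%N ->
     forall c1 c2 : {ffun 'I_s -> bool},
       tau T q l c1 = tau T q l c2 %[mod T j] -> c1 = c2)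
  /\
  (forall i : 'I_s, forall j : nat, (l i <= j < l i.+1)%N ->
     forall c1 c2 : {ffun 'I_s -> bool}, c1 i = false -> c2 i = false ->
       tau T q l c1 = tau T q l c2 %[mod T j] -> c1 = c2).

From HB Require Import structures.
From mathcomp Require Import all_boot all_order all_algebra.
Set Implicit Arguments. Unset Strict Implicit. Unset Printing Implicit Defensive.
Import Order.TTheory GRing.Theory Num.Theory.
Local Open Scope ring_scope.

(* Proof strategy (Walsh–Fourier expansion of the parity check).
   1. Orthogonality of characters: summing (-1)^(w.X) over all X in F_2^P
      gives 2^|P| if w = 0 and 0 otherwise; hence Fourier inversion
      (-1)^f(y) = sum_b E(f + phi_b) (-1)^(b.y).
   2. Expanding each of the 2^s factors (-1)^f(x(t+tau_c)) of (-1)^PC by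
      inversion, a choice phi : c |-> phi_c in F_2^n contributes
      prod_c E(f + phi_(phi c)) times the sign of a linear form in the
      initial bits, whose incidence vector is [mvec phi].  Averaging over the
      bits (step 1) keeps exactly the phi with [mvec phi = 0]
      ([bias_PC_formula]).
   3. If some phi c0 has a coordinate j >= k, Assumption (G)(i) makes the bit
      x_j((t+tau_c0) mod T_j) occur only once, so [mvec phi <> 0].  By the
      uniqueness of a, every phi with nonzero product is then constant = a.
   4. For phi constant = a (a in V_k), coordinates outside the first k vanish, and inside
      block i flipping c_i preserves tau_c mod T_j (T_j divides M_i), so every
      bit is hit an even number of times and [mvec phi = 0].  Only phi = a
      survives, contributing E(f + phi_a)^(2^s).
   The resilient case follows since the only vector of V_k of weight > k-1
   is 1_k.  The argument uses only part (i) of Assumption (G), positivity of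
   the periods and the block boundaries l_1 = 0, l_(s+1) = k. *)

Definition sgn (b : bool) : rat := (-1) ^+ b.

Lemma sgn_addb (b1 b2 : bool) : sgn (b1 (+) b2) = sgn b1 * sgn b2.
Proof. exact: signr_addb. Qed.

Lemma sgn_bigxor (I : finType) (P : pred I) (F : I -> bool) :
  sgn (\big[addb/false]_(i | P i) F i) = \prod_(i | P i) sgn (F i).
Proof. exact: (big_morph sgn sgn_addb). Qed.

(* Flipping one coordinate of a Boolean vector is an involution; it is the
   reindexing behind every cancellation argument below. *)
Definition flip (P : finType) (p0 : P) (X : {ffun P -> bool}) : {ffun P -> bool} :=
  [ffun p => if p == p0 then ~~ X p else X p].

Lemma flip_inj (P : finType) (p0 : P) : injective (flip p0).
Proof.
move=> X Y /ffunP H; apply/ffunP => p; have := H p; rewrite !ffunE.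
by case: eqP => _ //; case: (X p); case: (Y p).
Qed.

Lemma card_neq0 (A : finType) (a : A) : (#|A|%:R : rat) != 0.
Proof. by rewrite pnatr_eq0 -lt0n; apply/card_gt0P; exists a. Qed.

Lemma sum_sgn_dot (P : finType) (w : {ffun P -> bool}) :
  \sum_(X : {ffun P -> bool}) sgn (\big[addb/false]_(p : P) (w p && X p))
  = if [forall p, ~~ w p] then #|{ffun P -> bool}|%:R else 0.
Proof.
case: ifP => [/forallP w0 | /forallP w_neq0].
  rewrite -sum1_card natr_sum; apply: eq_bigr => X _.
  by rewrite big1 // => p _; rewrite (negbTE (w0 p)).
have [p0 wp0] : exists p0, w p0.
  by apply/existsP; apply: contraT; rewrite negb_exists => /forallP.
set S := \sum_X _.
have S_opp : S = - S.
  rewrite {1}/S (reindex_inj (@flip_inj _ p0)) /S -sumrN; apply: eq_bigr => X _.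
  rewrite (bigD1 p0) //= [in RHS](bigD1 p0) //= ffunE eqxx wp0 /=.
  rewrite (eq_bigr (fun p => w p && X p)); last first.
    by move=> p /negbTE Hp; rewrite ffunE Hp.
  by rewrite -[~~ X p0]addTb -addbA sgn_addb /sgn expr1 mulN1r.
have : S *+ 2 == 0 by rewrite mulr2n {1}S_opp addNr.
by rewrite mulrn_eq0 /= => /eqP.
Qed.

Lemma dotb_xor n (b x y : {ffun 'I_n -> bool}) :
  dotb b x (+) dotb b y = \big[addb/false]_i ([ffun i => x i (+) y i] i && b i).
Proof.
rewrite /dotb -big_split /=; apply: eq_bigr => i _.
by rewrite ffunE -andb_addr andbC.
Qed.

Lemma fourier_inversion n (f : {ffun 'I_n -> bool} -> bool) (y : {ffun 'I_n -> bool}) :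
  sgn (f y) = \sum_b bias (fun x => f x (+) dotb b x) * sgn (dotb b y).
Proof.
rewrite /bias.
under eq_bigr => b _ do rewrite mulrAC mulrC mulr_suml.
rewrite -mulr_sumr exchange_big /=.
under eq_bigr => x _.
  under eq_bigr => b _ do
    rewrite -/(sgn _) sgn_addb -mulrA -sgn_addb dotb_xor.
  rewrite -mulr_sumr sum_sgn_dot.
  over.
rewrite (bigD1 y) //= big1; last first.
  move=> x x_neq_y; case: ifP; last by rewrite mulr0.
  move/forallP => xy0; case/eqP: x_neq_y; apply/ffunP => i; have := xy0 i.
  by rewrite ffunE; case: (x i); case: (y i).
rewrite addr0 (_ : [forall i, _] = true); last first.
  by apply/forallP => i; rewrite ffunE addbb.
by rewrite mulrCA mulVf ?mulr1 // (card_neq0 y).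
Qed.

(* Incidence vector of the linear form xor_c phi_c . x(t + tau_c) in the
   initial bits: bit (j, r) is hit once for every c with phi_c(j) = 1 and
   (t + tau_c) mod T_j = r. *)
Definition mvec n s (T q l : nat -> nat) (t : nat)
  (phi : {ffun {ffun 'I_s -> bool} -> {ffun 'I_n -> bool}}) : {ffun bitsT n T -> bool} :=
  [ffun p => \big[addb/false]_(c : {ffun 'I_s -> bool})
     (phi c (tag p) && ((t + tau T q l c) %% T (tag p) == val (tagged p))%N)].
Arguments mvec : clear implicits.

Lemma dot_shifts_mvec n s (T q l : nat -> nat)
  (HT : forall j : nat, (j < n)%N -> (0 < T j)%N)
  (t : nat) (phi : {ffun {ffun 'I_s -> bool} -> {ffun 'I_n -> bool}}) (X : Bits n T) :
  \big[addb/false]_(c : {ffun 'I_s -> bool})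
     dotb (phi c) [ffun j : 'I_n => xval X j (t + tau T q l c)]
  = \big[addb/false]_(p : bitsT n T) (mvec n s T q l t phi p && X p).
Proof.
under [RHS]eq_bigr => p _ do rewrite ffunE big_distrl /=.
rewrite [RHS]exchange_big /=; apply: eq_bigr => c _.
rewrite (partition_big (fun p : bitsT n T => tag p) xpredT) //=.
apply: eq_bigr => j _.
have r_lt : ((t + tau T q l c) %% T j < T j)%N by rewrite ltn_pmod // HT.
pose p0 : bitsT n T := Tagged (fun j : 'I_n => 'I_(T j)) (Ordinal r_lt).
rewrite (bigD1 p0) /=; last by rewrite eqxx.
rewrite big1 ?addbF; last first.
  case=> j' r /andP[/eqP /= Ej p_neq]; subst j'.
  case: eqP; rewrite ?andbF ?andFb //= => Er.
  by case/eqP: p_neq; rewrite /p0; congr Tagged; apply: val_inj; rewrite /= Er.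
by rewrite ffunE eqxx andbT /xval insubT.
Qed.

Lemma bias_PC_formula n s (T q l : nat -> nat)
  (HT : forall j : nat, (j < n)%N -> (0 < T j)%N)
  (f : {ffun 'I_n -> bool} -> bool) (t : nat) :
  bias (fun X : Bits n T => PC s q l f X t)
  = \sum_(phi : {ffun {ffun 'I_s -> bool} -> {ffun 'I_n -> bool}})
      (\prod_c bias (fun x => f x (+) dotb (phi c) x)) *
      (if [forall p, ~~ mvec n s T q l t phi p] then 1 else 0).
Proof.
rewrite /bias.
under eq_bigr => X _.
  rewrite -/(sgn _) /PC sgn_bigxor.
  under eq_bigr => c _ do rewrite fourier_inversion.
  rewrite bigA_distr_bigA /=.
  under eq_bigr => phi _ do rewrite big_split /= -sgn_bigxor dot_shifts_mvec //.
  over.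
rewrite exchange_big /= mulr_suml; apply: eq_bigr => phi _.
rewrite -mulr_sumr sum_sgn_dot -mulrA; congr (_ * _).
case: ifP => _; last by rewrite mul0r.
by rewrite mulfV // (card_neq0 [ffun _ => false]).
Qed.

(* Step 3: a coordinate j >= k set in some phi_c0 leaves a bit hit exactly
   once, because the shifts tau_c are pairwise incongruent mod T_j. *)
Lemma mvec_neq0_outside_Vk n k s (T q l : nat -> nat)
  (HT : forall j : nat, (j < n)%N -> (0 < T j)%N)
  (HG1 : forall j : nat, (k <= j < n)%N ->
     forall c1 c2 : {ffun 'I_s -> bool},
       tau T q l c1 = tau T q l c2 %[mod T j] -> c1 = c2)
  (t : nat) (phi : {ffun {ffun 'I_s -> bool} -> {ffun 'I_n -> bool}})
  (c0 : {ffun 'I_s -> bool}) (j : 'I_n) :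
  (k <= j)%N -> phi c0 j -> ~~ [forall p, ~~ mvec n s T q l t phi p].
Proof.
move=> kj phi_j; rewrite negb_forall; apply/existsP.
exists (Tagged (fun j : 'I_n => 'I_(T j))
          (Ordinal (@ltn_pmod (t + tau T q l c0) _ (HT j (ltn_ord j))))).
rewrite negbK ffunE /= (bigD1 c0) //= eqxx phi_j big1 // => c c_neq.
case E: (_ == _); rewrite ?andbF //.
move/negP: c_neq; case; apply/eqP; apply: (HG1 j); first by rewrite kj ltn_ord.
by apply/eqP; rewrite -(eqn_modDl t).
Qed.

Lemma block_exists (l : nat -> nat) (s j : nat) :
  l 0%N = 0%N -> (j < l s)%N -> exists i, [&& (i < s)%N, (l i <= j)%N & (j < l i.+1)%N].
Proof.
move=> Hl0; elim: s => [|s IH]; first by rewrite Hl0.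
move=> j_lt; case: (ltnP j (l s)) => j_ls.
  by case: (IH j_ls) => i /and3P[H1 H2 H3]; exists i; rewrite H2 H3 ltnS ltnW.
by exists s; rewrite ltnSn j_ls j_lt.
Qed.

Lemma dvd_Mblk (T q l : nat -> nat) (i j : nat) :
  (l i <= j)%N -> (j < l i.+1)%N -> (T j %| Mblk T q l i)%N.
Proof.
move=> H1 H2; rewrite /Mblk dvdn_mull //.
rewrite (@big_cat_nat _ _ _ j) ?(ltnW H2) //= (big_ltn H2) /=.
by apply: dvdn_trans (dvdn_lcmr _ _); apply: dvdn_lcml.
Qed.

Lemma bigxor_flip_invariant s (i : 'I_s) (g : {ffun 'I_s -> bool} -> bool) :
  (forall c, g (flip i c) = g c) -> \big[addb/false]_c g c = false.
Proof.
move=> g_inv; rewrite (bigID (fun c : {ffun 'I_s -> bool} => c i)) /=.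
rewrite (reindex_inj (@flip_inj _ i)) /=.
rewrite (eq_bigl (fun c : {ffun 'I_s -> bool} => ~~ c i)); last first.
  by move=> c; rewrite ffunE eqxx.
by rewrite (eq_bigr g) ?addbb // => c _; exact: g_inv.
Qed.

(* Flipping c_i changes tau_c by M_i, hence not modulo a divisor of M_i. *)
Lemma tau_flip s (T q l : nat -> nat) (i : 'I_s) (j : nat) c :
  (T j %| Mblk T q l i)%N -> (tau T q l (flip i c) = tau T q l c %[mod T j])%N.
Proof.
move=> dvd_M.
have tau_mod c' : (tau T q l c' = \sum_(i' < s | i' != i) c' i' * Mblk T q l i' %[mod T j])%N.
  by rewrite /tau (bigD1 i) //= -(divnK dvd_M) mulnA modnMDl.
rewrite !tau_mod; congr (_ %% _)%N; apply: eq_bigr => i' i'_neq.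
by rewrite ffunE (negbTE i'_neq).
Qed.

Lemma mvec_const_Vk n k s (T q l : nat -> nat) (t : nat)
  (Hl0 : l 0%N = 0%N) (Hlk : l s = k) (a : {ffun 'I_n -> bool}) :
  inVk k a -> [forall p, ~~ mvec n s T q l t [ffun _ => a] p].
Proof.
move=> /forallP a_Vk; apply/forallP => -[j r]; rewrite ffunE /=.
case: (ltnP j k) => [j_lt_k | k_le_j]; last first.
  by rewrite big1 // => c _; rewrite ffunE (negbTE (implyP (a_Vk j) k_le_j)).
have [i /and3P[i_lt lij jli]] := block_exists Hl0 (leq_trans j_lt_k (eq_leq (esym Hlk))).
rewrite (@bigxor_flip_invariant _ (Ordinal i_lt)) // => c.
by rewrite !ffunE -modnDmr (tau_flip c (dvd_Mblk T q lij jli)) modnDmr.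
Qed.

Lemma bias_PC_unique_coeff n k s (T q l : nat -> nat) (f : {ffun 'I_n -> bool} -> bool)
  (HT : forall j : nat, (j < n)%N -> (0 < T j)%N)
  (Hl0 : l 0%N = 0%N) (Hlk : l s = k)
  (HG1 : forall j : nat, (k <= j < n)%N ->
     forall c1 c2 : {ffun 'I_s -> bool},
       tau T q l c1 = tau T q l c2 %[mod T j] -> c1 = c2)
  (a : {ffun 'I_n -> bool}) (a_Vk : inVk k a)
  (a_unique : forall b : {ffun 'I_n -> bool}, inVk k b ->
        bias (fun x => f x (+) dotb b x) != 0 -> b = a) (t : nat) :
  bias (fun X : Bits n T => PC s q l f X t)
  = (bias (fun x => f x (+) dotb a x)) ^+ (2 ^ s).
Proof.
rewrite bias_PC_formula // (bigD1 [ffun _ => a]) //= [X in _ + X]big1 ?addr0.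
  rewrite (mvec_const_Vk T q t Hl0 Hlk a_Vk) mulr1.
  under eq_bigr => c _ do rewrite ffunE.
  by rewrite prodr_const card_ffun card_bool card_ord.
move=> phi phi_neq; case: ifP => mvec0; last by rewrite mulr0.
rewrite mulr1; apply/eqP; apply: contraTT mvec0 => prod_neq0.
have /existsP [c0 phic0_neq] : [exists c0, phi c0 != a].
  apply: contraR phi_neq; rewrite negb_exists => /forallP phi_a.
  by apply/eqP/ffunP => c; rewrite ffunE; apply/eqP; have := phi_a c; rewrite negbK.
have bias_c0 : bias (fun x => f x (+) dotb (phi c0) x) != 0.
  by move: prod_neq0; rewrite prodf_seq_neq0 => /allP /(_ c0 (mem_index_enum _)).
have : ~~ inVk k (phi c0) by apply: contra phic0_neq => Hk; rewrite (a_unique _ Hk bias_c0).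
rewrite /inVk negb_forall => /existsP [j]; rewrite negb_imply negbK => /andP[kj phi_j].
exact: (mvec_neq0_outside_Vk HT HG1 t kj phi_j).
Qed.

Lemma hweight_Vk_lt n k (Hkn : (k <= n)%N) (b : {ffun 'I_n -> bool}) :
  inVk k b -> b != onek n k -> (hweight b <= k.-1)%N.
Proof.
move=> /forallP b_Vk b_neq.
have /existsP [i0 bi0_neq] : [exists i, b i != onek n k i].
  apply: contraR b_neq; rewrite negb_exists => /forallP H.
  by apply/eqP/ffunP => i; apply/eqP; have := H i; rewrite negbK.
have i0_lt_k : (i0 < k)%N.
  rewrite ltnNge; apply/negP => k_le; move: bi0_neq; rewrite ffunE ltnNge k_le /=.
  by have := b_Vk i0; rewrite k_le /= => /negbTE ->.
have bi0 : b i0 = false by move: bi0_neq; rewrite ffunE i0_lt_k; case: (b i0).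
have supp_proper : [set i | b i] \proper [set i : 'I_n | (i < k)%N].
  apply/properP; split; last by exists i0; rewrite !inE ?bi0 ?i0_lt_k.
  apply/subsetP => i; rewrite !inE => bi; rewrite ltnNge; apply/negP => k_le.
  by have := b_Vk i; rewrite k_le bi.
have card_first_k : (#|[set i : 'I_n | (i < k)%N]| <= k)%N.
  rewrite -sum1dep_card (eq_bigl (fun i : 'I_n => true && (i < k)%N)) //.
  by rewrite -(big_ord_widen_cond n xpredT (fun _ => 1%N) Hkn) sum1_card card_ord.
have := leq_trans (proper_card supp_proper) card_first_k.
by rewrite /hweight; case: (k).
Qed.

Set Strict Implicit. Unset Implicit Arguments.

Theorem theorem4 (n k s : nat) (T q l : nat -> nat)
  (f : {ffun 'I_n -> bool} -> bool)
  (HT : forall j : nat, (j < n)%N -> (0 < T j)%N)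
  (Hq : forall i : nat, (i < s)%N -> (0 < q i)%N)
  (Hs : (1 <= s)%N)
  (Hl0 : l 0%N = 0%N)
  (Hlinc : forall i : nat, (i < s)%N -> (l i < l i.+1)%N)
  (Hlk : l s = k)
  (Hkn : (k <= n)%N)
  (HG : assumptionG n k s T q l) :
  (forall a : {ffun 'I_n -> bool},
     inVk k a ->
     bias (fun x => f x (+) dotb a x) != 0 ->
     (forall b : {ffun 'I_n -> bool}, inVk k b ->
        bias (fun x => f x (+) dotb b x) != 0 -> b = a) ->
     forall t : nat,
       bias (fun X : Bits n T => PC s q l f X t)
       = (bias (fun x => f x (+) dotb a x)) ^+ (2 ^ s))
  /\
  (resilient f k.-1 ->
     forall t : nat,
       bias (fun X : Bits n T => PC s q l f X t)
       = (bias (fun x => f x (+) dotb (onek n k) x)) ^+ (2 ^ s)).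
Proof.
case: HG => HG1 _; split=> [a a_Vk _ a_unique | f_res].
  exact: (bias_PC_unique_coeff HT Hl0 Hlk HG1 a_Vk a_unique).
have onek_Vk : inVk k (onek n k).
  by apply/forallP => i; apply/implyP => k_le; rewrite ffunE -leqNgt.
apply: (bias_PC_unique_coeff HT Hl0 Hlk HG1 onek_Vk) => b b_Vk.
by apply: contraNeq => b_neq; rewrite f_res // hweight_Vk_lt.
Qed.
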